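(* Let $\rho,\pi,\gamma,\delta>0$, $0<\beta<1$, $\sigma>0$ with $\sigma\neq 1$, and assume $$\rho<\delta<\rho+\delta\sigma,\qquad \frac{\delta+\pi-\pi\beta}{\beta}-\frac{\delta-\rho}{\sigma}>0 .$$ Put $z^*=\left(\frac{\beta\gamma}{\delta+\pi}\right)^{\frac{1}{\beta-1}}$ and $\theta=\frac{\delta+\pi-\pi\beta}{\beta}-\frac{\delta-\rho}{\sigma}$. Let $c_1>0$, $z_0>0$ with $z_0\neq z^*$, and $c_0,k_0,h_0,u_0>0$ with $u_0=z_0k_0/h_0$. Define for $t\ge 0$ $$z(t)=\frac{z^*z_0}{\left[(z^{*1-\beta}-z_0^{1-\beta})e^{-\frac{(1-\beta)(\delta+\pi)}{\beta}t}+z_0^{1-\beta}\right]^{\frac{1}{1-\beta}}},\qquad F(t)=\int_0^t z(s)^{\frac{\sigma-\beta}{\sigma}}e^{-\theta s}\,ds,$$ and $K=\frac{k_0}{c_0 z_0^{\frac{\beta-\sigma}{\sigma}}}$. Assume $$c_0 z_0^{\frac{\beta}{\sigma}}=\left(\frac{c_1\delta}{(1-\beta)\gamma}\right)^{-\frac{1}{\sigma}},\qquad \lim_{t\to\infty}F(t)=K,$$ $$\frac{\gamma(1-\beta)(\rho-\delta+\delta\sigma)}{\delta}=\frac{u_0}{k_0}\Big[\sigma c_0z_0^{\beta-1}-(\rho+\pi-\pi\sigma)k_0z_0^{\beta-1}+\beta\gamma(1-\sigma)k_0\Big].$$ Define $$c(t)=c_0z_0^{\frac{\beta}{\sigma}}e^{-\frac{\rho-\delta}{\sigma}t}z(t)^{-\frac{\beta}{\sigma}},\qquad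 k(t)=\big(K-F(t)\big)c_0z_0^{\frac{\beta}{\sigma}}z(t)^{-1}e^{\frac{\delta+\pi-\pi\beta}{\beta}t},$$ $$h(t)=\frac{h_0\Big[\sigma c_0z_0^{\frac{\beta}{\sigma}}e^{-\frac{\rho-\delta}{\sigma}t}z(t)^{\beta-\frac{\beta}{\sigma}}+\big(\beta\gamma(1-\sigma)-(\rho+\pi-\pi\sigma)z(t)^{\beta-1}\big)\big(K-F(t)\big)c_0z_0^{\frac{\beta}{\sigma}}e^{\frac{\delta+\pi-\pi\beta}{\beta}t}\Big]}{z_0\big[\sigma c_0z_0^{\beta-1}-(\rho+\pi-\pi\sigma)k_0z_0^{\beta-1}+\beta\gamma(1-\sigma)k_0\big]},$$ $$u(t)=\frac{u_0}{k_0}\Big[\sigma c_0z_0^{\beta-1}-(\rho+\pi-\pi\sigma)k_0z_0^{\beta-1}+\beta\gamma(1-\sigma)k_0\Big]\cdot\frac{K-F(t)}{\big[\beta\gamma(1-\sigma)-(\rho+\pi-\pi\sigma)z(t)^{\beta-1}\big]\big(K-F(t)\big)+\sigma z(t)^{\beta-\frac{\beta}{\sigma}}e^{-\theta t}},$$ $$\lambda(t)=\frac{c_1\delta}{(1-\beta)\gamma}e^{(\rho-\delta)t}z(t)^{\beta},\qquad \mu(t)=c_1e^{(\rho-\delta)t}.$$ Then $(c,u,k,h,\lambda,\mu)$ is a solution of the first-order conditions of the Lucas–Uzawa problem, namely for all $t\ge0$: $$\lambda=c^{-\sigma},\quad u^{\beta}=\frac{\gamma(1-\beta)k^{\beta}h^{-\beta}}{\delta}\frac{\lambda}{\mu},\quad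 \dot k=\gamma k^{\beta}u^{1-\beta}h^{1-\beta}-\pi k-c,\quad \dot h=\delta(1-u)h,$$ $$\dot\lambda=-\lambda\gamma\beta u^{1-\beta}k^{\beta-1}h^{1-\beta}+\lambda(\rho+\pi),\quad \dot\mu=\mu(\rho-\delta),$$ with $c(0)=c_0$, $k(0)=k_0$, $h(0)=h_0$, $u(0)=u_0$, $z(0)=z_0$, and $z(t)=h(t)u(t)/k(t)$, and it satisfies the transversality conditions $\lim_{t\to\infty}e^{-\rho t}\lambda(t)k(t)=0$ and $\lim_{t\to\infty}e^{-\rho t}\mu(t)h(t)=0$.
   Context: Lucas–Uzawa model: a representative agent maximizes $\int_0^\infty \frac{c^{1-\sigma}-1}{1-\sigma}e^{-\rho t}\,dt$ over consumption $c$ and the fraction $u$ of labor allocated to production of physical capital, subject to $\dot k=\gamma k^\beta u^{1-\beta}h^{1-\beta}-\pi k-c$ and $\dot h=\delta(1-u)h$, where $k$ is physical capital, $h$ is human capital, $\rho$ the discount rate, $\pi$ the depreciation rate, $\gamma,\delta$ technology levels, $\beta$ the output elasticity of physical capital, $1/\sigma$ the elasticity of intertemporal substitution. The current-value Hamiltonian is $H=\frac{c^{1-\sigma}-1}{1-\sigma}+\lambda[\gamma k^\beta u^{1-\beta}h^{1-\beta}-\pi k-c]+\mu\delta(1-u)h$ with costate variables $\lambda,\mu$; the displayed equations are the Pontryagin first-order conditions. The variable $z$ denotes $hu/k$. *)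

From Stdlib Require Import Reals.
From Coquelicot Require Import Coquelicot.
Open Scope R_scope.

Record LUparams := mkLU {
  lu_rho : R; lu_dpi : R; lu_gam : R; lu_del : R; lu_bet : R; lu_sig : R;
  lu_c1 : R; lu_z0 : R; lu_c0 : R; lu_k0 : R; lu_h0 : R; lu_u0 : R }.

Section LU.
Variable p : LUparams.

(* real powers x^a are Rpower x a (= exp (a ln x)), used only for x > 0 *)
Definition zstar : R :=
  Rpower (lu_bet p * lu_gam p / (lu_del p + lu_dpi p)) (1 / (lu_bet p - 1)).

Definition theta : R :=
  (lu_del p + lu_dpi p - lu_dpi p * lu_bet p) / lu_bet p - (lu_del p - lu_rho p) / lu_sig p.

Definition zf (t : R) : R :=
  zstar * lu_z0 p /
  Rpower ((Rpower zstar (1 - lu_bet p) - Rpower (lu_z0 p) (1 - lu_bet p))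
            * exp (- ((1 - lu_bet p) * (lu_del p + lu_dpi p) / lu_bet p) * t)
          + Rpower (lu_z0 p) (1 - lu_bet p)) (1 / (1 - lu_bet p)).

Definition Ff (t : R) : R :=
  RInt (fun s => Rpower (zf s) ((lu_sig p - lu_bet p) / lu_sig p) * exp (- theta * s)) 0 t.

Definition Kc : R := lu_k0 p / (lu_c0 p * Rpower (lu_z0 p) ((lu_bet p - lu_sig p) / lu_sig p)).

Definition Dc : R :=
  lu_sig p * lu_c0 p * Rpower (lu_z0 p) (lu_bet p - 1)
  - (lu_rho p + lu_dpi p - lu_dpi p * lu_sig p) * lu_k0 p * Rpower (lu_z0 p) (lu_bet p - 1)
  + lu_bet p * lu_gam p * (1 - lu_sig p) * lu_k0 p.

Definition cf (t : R) : R :=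
  lu_c0 p * Rpower (lu_z0 p) (lu_bet p / lu_sig p) * exp (- ((lu_rho p - lu_del p) / lu_sig p) * t)
  * Rpower (zf t) (- (lu_bet p / lu_sig p)).

Definition kf (t : R) : R :=
  (Kc - Ff t) * lu_c0 p * Rpower (lu_z0 p) (lu_bet p / lu_sig p) * / zf t
  * exp ((lu_del p + lu_dpi p - lu_dpi p * lu_bet p) / lu_bet p * t).

Definition hf (t : R) : R :=
  lu_h0 p *
  (lu_sig p * lu_c0 p * Rpower (lu_z0 p) (lu_bet p / lu_sig p)
     * exp (- ((lu_rho p - lu_del p) / lu_sig p) * t)
     * Rpower (zf t) (lu_bet p - lu_bet p / lu_sig p)
   + (lu_bet p * lu_gam p * (1 - lu_sig p)
      - (lu_rho p + lu_dpi p - lu_dpi p * lu_sig p) * Rpower (zf t) (lu_bet p - 1))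
     * (Kc - Ff t) * lu_c0 p * Rpower (lu_z0 p) (lu_bet p / lu_sig p)
     * exp ((lu_del p + lu_dpi p - lu_dpi p * lu_bet p) / lu_bet p * t))
  / (lu_z0 p * Dc).

Definition uf (t : R) : R :=
  lu_u0 p / lu_k0 p * Dc *
  ((Kc - Ff t) /
   ((lu_bet p * lu_gam p * (1 - lu_sig p)
     - (lu_rho p + lu_dpi p - lu_dpi p * lu_sig p) * Rpower (zf t) (lu_bet p - 1)) * (Kc - Ff t)
    + lu_sig p * Rpower (zf t) (lu_bet p - lu_bet p / lu_sig p) * exp (- theta * t))).

Definition lamf (t : R) : R :=
  lu_c1 p * lu_del p / ((1 - lu_bet p) * lu_gam p) * exp ((lu_rho p - lu_del p) * t)
  * Rpower (zf t) (lu_bet p).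

Definition muf (t : R) : R := lu_c1 p * exp ((lu_rho p - lu_del p) * t).

End LU.

(* The ratio z solves the Bernoulli equation z' = z ((δ + π)/β - γ z^(1-β)), so z^(1-β) stays
   between two positive constants for t ≥ 0.  With G = K - F (the tail of the integral
   defining F), g = (δ + π - πβ)/β and the bracket
     B = (βγ(1-σ) - (ρ + π - πσ) z^(β-1)) G + σ z^(β-β/σ) e^(-θt),
   one has k = c0 z0^(β/σ) G e^(gt) / z, h = const · e^(gt) B and u = const · G / B, and every
   first-order condition becomes an identity between derivatives of these closed forms.
   The one delicate point is B > 0: B' = -r B - γ(1-β)(ρ - δ + δσ) G with
   r = (1-β)(δ+π)/β < θ, so B e^(rt) is strictly decreasing, and it tends to 0 because G and B
   are O(e^(-θt)).  The same bounds show that e^(-ρt) λ k and e^(-ρt) μ h are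
   O(e^(-(δ - (δ-ρ)/σ) t)), which gives the transversality conditions. *)

From Stdlib Require Import Reals Lra.
From Coquelicot Require Import Coquelicot.
Open Scope R_scope.

Lemma exp_le_exp x y : x <= y -> exp x <= exp y.
Proof. intros [Hlt | ->]; [left; apply exp_increasing | right]; auto. Qed.

Lemma Rpower_pos x c : 0 < Rpower x c.
Proof. apply exp_pos. Qed.

Lemma Rpower_div x y c : 0 < x -> 0 < y -> Rpower (x / y) c = Rpower x c / Rpower y c.
Proof.
  intros Hx Hy. unfold Rpower. rewrite ln_div by auto.
  rewrite Rmult_minus_distr_l, Rminus_def, exp_plus, exp_Ropp. reflexivity.
Qed.

Lemma Rpower_exp x c : Rpower (exp x) c = exp (c * x).
Proof. unfold Rpower. rewrite ln_exp. reflexivity. Qed.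

Lemma Rpower_1_plus x c : 0 < x -> Rpower x (1 + c) = x * Rpower x c.
Proof. intros Hx. rewrite Rpower_plus, Rpower_1 by auto. reflexivity. Qed.

Lemma Rpower_le_max x m M c : 0 < m -> m <= x <= M ->
  Rpower x c <= Rmax (Rpower m c) (Rpower M c).
Proof.
  intros Hm [HmX HxM]. unfold Rpower.
  assert (ln m <= ln x) by (apply ln_le; lra).
  assert (ln x <= ln M) by (apply ln_le; lra).
  destruct (Rle_or_lt 0 c) as [Hc | Hc].
  - eapply Rle_trans; [| apply Rmax_r]. apply exp_le_exp. nra.
  - eapply Rle_trans; [| apply Rmax_l]. apply exp_le_exp. nra.
Qed.

Lemma Rpower_ratio x y w c : 0 < x -> 0 < y -> 0 < w ->
  Rpower (x * y / w) c = Rpower x c * Rpower y c / Rpower w c.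
Proof.
  intros Hx Hy Hw. rewrite Rpower_div, Rpower_mult_distr; auto.
  apply Rmult_lt_0_compat; auto.
Qed.

Lemma Rpower_cobb_douglas k h z b : 0 < k -> 0 < h -> 0 < z ->
  Rpower k b * Rpower (z * k / h) (1 - b) * Rpower h (1 - b) = k * Rpower z (1 - b).
Proof.
  intros Hk Hh Hz. rewrite Rpower_ratio by auto.
  assert (Hkk : Rpower k b * Rpower k (1 - b) = k)
    by (rewrite <- Rpower_plus; replace (b + (1 - b)) with 1 by ring; apply Rpower_1, Hk).
  assert (0 < Rpower h (1 - b)) by apply Rpower_pos.
  transitivity (Rpower z (1 - b) * (Rpower k b * Rpower k (1 - b))); [field; lra |].
  rewrite Hkk. ring.
Qed.

Lemma Rpower_cobb_douglas_div k h z b : 0 < k -> 0 < h -> 0 < z ->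
  Rpower (z * k / h) (1 - b) * Rpower k (b - 1) * Rpower h (1 - b) = Rpower z (1 - b).
Proof.
  intros Hk Hh Hz. rewrite Rpower_ratio by auto.
  assert (Hkk : Rpower k (1 - b) * Rpower k (b - 1) = 1)
    by (rewrite <- Rpower_plus; replace (1 - b + (b - 1)) with 0 by ring; apply Rpower_O, Hk).
  assert (0 < Rpower h (1 - b)) by apply Rpower_pos.
  transitivity (Rpower z (1 - b) * (Rpower k (1 - b) * Rpower k (b - 1))); [field; lra |].
  rewrite Hkk. ring.
Qed.

Lemma le_mul_exp_of_le_exp_neg a M r t : a <= M * exp (- r * t) -> a * exp (r * t) <= M.
Proof.
  intros Ha. pose proof (exp_pos (r * t)).
  replace M with (M * exp (- r * t) * exp (r * t))
    by (rewrite Rmult_assoc, <- exp_plus; replace (- r * t + r * t) with 0 by ring;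
        rewrite exp_0; ring).
  apply Rmult_le_compat_r; lra.
Qed.

Lemma is_lim_exp_neg nu : nu < 0 -> is_lim (fun t => exp (nu * t)) p_infty 0.
Proof.
  intros Hnu.
  apply (is_lim_ext (fun t => exp (nu * t + 0))); [intros t; rewrite Rplus_0_r; reflexivity |].
  apply (is_lim_comp_lin (fun y => exp y) nu 0 p_infty 0); [| lra].
  replace (Rbar_plus (Rbar_mult nu p_infty) 0) with m_infty.
  - apply is_lim_exp_m.
  - simpl. destruct (Rle_dec 0 nu); [exfalso; lra | reflexivity].
Qed.

Lemma is_lim_0_of_exp_bound (f : R -> R) C nu : nu < 0 ->
  (forall t, 0 <= t -> Rabs (f t) <= C * exp (nu * t)) -> is_lim f p_infty 0.
Proof.
  intros Hnu Hf.
  assert (Hlim := is_lim_scal_l _ C _ _ (is_lim_exp_neg nu Hnu)).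
  simpl in Hlim. rewrite Rmult_0_r in Hlim.
  apply (is_lim_le_le_loc (fun t => - (C * exp (nu * t))) (fun t => C * exp (nu * t))).
  - exists 0. intros t Ht. apply Rabs_le_between, Hf. lra.
  - replace (Finite 0) with (Rbar_opp 0) by (simpl; f_equal; ring).
    apply is_lim_opp. exact Hlim.
  - exact Hlim.
Qed.

Lemma MVT_closed (f df : R -> R) a b : a < b ->
  (forall x, a <= x <= b -> is_derive f x (df x)) ->
  exists c, a <= c <= b /\ f b - f a = df c * (b - a).
Proof.
  intros Hab Hd.
  destruct (MVT_gen f a b df) as [c [Hc Hfc]]; rewrite ?Rmin_left, ?Rmax_right in * by lra.
  - intros x Hx. apply Hd. lra.
  - intros x Hx. apply continuity_pt_filterlim, (ex_derive_continuous f x).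
    exists (df x). apply Hd. exact Hx.
  - exists c. auto.
Qed.

Lemma is_lim_le_of_derive_nonpos (f df : R -> R) a (L : R) :
  (forall x, a <= x -> is_derive f x (df x)) -> (forall x, a <= x -> df x <= 0) ->
  is_lim f p_infty L -> L <= f a.
Proof.
  intros Hd Hneg Hlim.
  assert (Hle : Rbar_le L (f a)).
  { apply (is_lim_le_loc f (fun _ => f a) p_infty); [| exact Hlim | apply is_lim_const].
    exists a. intros y Hy.
    destruct (MVT_closed f df a y) as [c [Hc Hfc]]; [lra | intros x Hx; apply Hd; lra |].
    assert (df c <= 0) by (apply Hneg; lra). nra. }
  exact Hle.
Qed.

Lemma is_lim_lt_of_derive_neg (f df : R -> R) a (L : R) :
  (forall x, a <= x -> is_derive f x (df x)) -> (forall x, a <= x -> df x < 0) ->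
  is_lim f p_infty L -> L < f a.
Proof.
  intros Hd Hneg Hlim.
  assert (Hstep : f (a + 1) < f a).
  { destruct (MVT_closed f df a (a + 1)) as [c [Hc Hfc]]; [lra | intros x Hx; apply Hd; lra |].
    assert (df c < 0) by (apply Hneg; lra). nra. }
  assert (L <= f (a + 1)).
  { apply (is_lim_le_of_derive_nonpos f df (a + 1)); auto.
    - intros x Hx. apply Hd. lra.
    - intros x Hx. left. apply Hneg. lra. }
  lra.
Qed.

Lemma is_derive_RInt_halfline (f : R -> R) a s0 t : s0 < a -> s0 < t ->
  (forall s, s0 < s -> continuous f s) -> is_derive (fun x => RInt f a x) t (f t).
Proof.
  intros Ha Ht Hc. apply (is_derive_RInt f _ a); [| apply Hc; exact Ht].
  assert (Hr : 0 < t - s0) by lra.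
  exists (mkposreal _ Hr). intros y Hy.
  change (Rabs (y - t) < t - s0) in Hy. apply Rabs_def2 in Hy.
  apply (RInt_correct f), (ex_RInt_continuous f). intros x Hx. apply Hc.
  pose proof (Rmin_glb_lt a y s0). lra.
Qed.

Lemma continuous_pos_left (f : R -> R) x : continuous f x -> 0 < f x ->
  exists y, y < x /\ 0 < f y.
Proof.
  intros Hc Hpos. destruct (Hc _ (open_gt 0 (f x) Hpos)) as [eps Heps].
  exists (x - eps / 2). split; [destruct eps; simpl; lra |].
  apply Heps. change (Rabs (x - eps / 2 - x) < eps).
  destruct eps as [e He]; simpl. rewrite Rabs_left; lra.
Qed.

Ltac rewrite_Derive H :=
  match type of H with
  | is_derive ?f ?t ?l =>
      replace (Derive (fun x => f x) t) with l by (symmetry; apply is_derive_unique; exact H)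
  end.

Section LucasUzawaPath.

Variable p : LUparams.

Local Notation ρ := (lu_rho p).
Local Notation π := (lu_dpi p).
Local Notation γ := (lu_gam p).
Local Notation δ := (lu_del p).
Local Notation β := (lu_bet p).
Local Notation σ := (lu_sig p).
Local Notation c1 := (lu_c1 p).
Local Notation z0 := (lu_z0 p).
Local Notation c0 := (lu_c0 p).
Local Notation k0 := (lu_k0 p).
Local Notation h0 := (lu_h0 p).
Local Notation u0 := (lu_u0 p).

Hypothesis pi_pos : 0 < π.
Hypothesis gam_pos : 0 < γ.
Hypothesis del_pos : 0 < δ.
Hypothesis bet_range : 0 < β < 1.
Hypothesis sig_pos : 0 < σ.
Hypothesis del_lt : δ < ρ + δ * σ.
Hypothesis theta_pos : (δ + π - π * β) / β - (δ - ρ) / σ > 0.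
Hypothesis z0_pos : 0 < z0.

Definition zrate : R := (1 - β) * (δ + π) / β.

Definition zY (t : R) : R :=
  (Rpower (zstar p) (1 - β) - Rpower z0 (1 - β)) * exp (- zrate * t) + Rpower z0 (1 - β).

Definition zgrowth (t : R) : R := (δ + π) / β - γ * Rpower (zf p t) (1 - β).

Lemma zf_zY t : zf p t = zstar p * z0 / Rpower (zY t) (1 / (1 - β)).
Proof. reflexivity. Qed.

Lemma zrate_pos : 0 < zrate.
Proof. unfold zrate. apply Rdiv_lt_0_compat; [apply Rmult_lt_0_compat |]; lra. Qed.

Lemma zstar_pow : Rpower (zstar p) (1 - β) = (δ + π) / (β * γ).
Proof.
  unfold zstar. rewrite Rpower_mult.
  replace (1 / (β - 1) * (1 - β)) with (- (1)) by (field; lra).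
  rewrite Rpower_Ropp, Rpower_1.
  - field. lra.
  - apply Rdiv_lt_0_compat; [apply Rmult_lt_0_compat |]; lra.
Qed.

Lemma zY_0 : zY 0 = Rpower (zstar p) (1 - β).
Proof. unfold zY. rewrite Rmult_0_r, exp_0. ring. Qed.

Lemma zY_between s0 s : s0 <= s ->
  Rmin (zY s0) (Rpower z0 (1 - β)) <= zY s <= Rmax (zY s0) (Rpower z0 (1 - β)).
Proof.
  intros Hs. unfold zY.
  set (a := Rpower (zstar p) (1 - β)). set (b := Rpower z0 (1 - β)).
  replace (exp (- zrate * s)) with (exp (- zrate * s0) * exp (- zrate * (s - s0)))
    by (rewrite <- exp_plus; f_equal; ring).
  assert (0 < exp (- zrate * s0)) by apply exp_pos.
  assert (0 < exp (- zrate * (s - s0))) by apply exp_pos.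
  assert (exp (- zrate * (s - s0)) <= 1).
  { rewrite <- exp_0. apply exp_le_exp. pose proof zrate_pos. nra. }
  unfold Rmin, Rmax. destruct Rle_dec; split; nra.
Qed.

(* [Ff] is also differentiated at [t = 0], which needs [zY > 0] a little to the left of 0. *)
Lemma zY_pos_from : exists s0, s0 < 0 /\ forall s, s0 <= s -> 0 < zY s.
Proof.
  destruct (continuous_pos_left zY 0) as [s0 [Hs0 Hpos]].
  - apply (ex_derive_continuous zY). unfold zY. auto_derive. exact I.
  - rewrite zY_0. apply Rpower_pos.
  - exists s0. split; [exact Hs0 |]. intros s Hs.
    destruct (zY_between s0 s Hs) as [Hmin _].
    assert (0 < Rpower z0 (1 - β)) by apply Rpower_pos.
    unfold Rmin in Hmin. destruct Rle_dec; lra.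
Qed.

Lemma zY_pos t : 0 <= t -> 0 < zY t.
Proof.
  intros Ht. destruct zY_pos_from as [s0 [Hs0 Hpos]]. apply Hpos. lra.
Qed.

Lemma zf_pos t : 0 < zf p t.
Proof.
  rewrite zf_zY. apply Rdiv_lt_0_compat; [| apply Rpower_pos].
  apply Rmult_lt_0_compat; [apply Rpower_pos | exact z0_pos].
Qed.

Lemma zf_0 : zf p 0 = z0.
Proof.
  rewrite zf_zY, zY_0, Rpower_mult.
  replace ((1 - β) * (1 / (1 - β))) with 1 by (field; lra).
  rewrite Rpower_1 by apply Rpower_pos. field. apply Rgt_not_eq, Rpower_pos.
Qed.

Lemma zf_pow_zY t : 0 < zY t ->
  Rpower (zf p t) (1 - β) = Rpower (zstar p) (1 - β) * Rpower z0 (1 - β) / zY t.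
Proof.
  intros HY. rewrite zf_zY, Rpower_div, Rpower_mult, <- Rpower_mult_distr;
    try apply Rpower_pos; try apply Rmult_lt_0_compat; try apply Rpower_pos; auto.
  replace (1 / (1 - β) * (1 - β)) with 1 by (field; lra).
  rewrite Rpower_1 by exact HY. reflexivity.
Qed.

Lemma zY_derive t : is_derive zY t (- zrate * (zY t - Rpower z0 (1 - β))).
Proof. unfold zY. auto_derive; [exact I | ring]. Qed.

Lemma zf_derive t : 0 < zY t -> is_derive (zf p) t (zf p t * zgrowth t).
Proof.
  intros HY. unfold zgrowth. rewrite zf_pow_zY, zstar_pow by exact HY.
  apply (is_derive_ext (fun s => zstar p * z0 / exp (1 / (1 - β) * ln (zY s)))); [reflexivity |].
  rewrite zf_zY. unfold Rpower at 1.
  auto_derive.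
  - repeat split; [eexists; apply zY_derive | exact HY | apply Rgt_not_eq, exp_pos].
  - rewrite_Derive (zY_derive t).
    assert (0 < exp (1 / (1 - β) * ln (zY t))) by apply exp_pos.
    unfold zrate. field. repeat split; lra.
Qed.

Lemma zf_pow_bounded c : exists M, forall t, 0 <= t -> Rpower (zf p t) c <= M.
Proof.
  set (a := zY 0). set (b := Rpower z0 (1 - β)). set (e := - (1 / (1 - β) * c)).
  exists (Rpower (zstar p * z0) c * Rmax (Rpower (Rmin a b) e) (Rpower (Rmax a b) e)).
  intros t Ht.
  assert (Ha : 0 < a) by (unfold a; rewrite zY_0; apply Rpower_pos).
  assert (Hb : 0 < b) by apply Rpower_pos.
  assert (HY := zY_between 0 t Ht).
  rewrite zf_zY, Rpower_div, Rpower_mult; try apply Rpower_pos;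
    try (apply Rmult_lt_0_compat; [apply Rpower_pos | exact z0_pos]).
  unfold Rdiv. rewrite <- Rpower_Ropp.
  apply Rmult_le_compat_l; [left; apply Rpower_pos |].
  apply Rpower_le_max; [unfold Rmin; destruct Rle_dec; lra | exact HY].
Qed.

Hypothesis F_lim : is_lim (Ff p) p_infty (Kc p).

Definition Fintegrand (s : R) : R := Rpower (zf p s) ((σ - β) / σ) * exp (- theta p * s).

Definition Ftail (t : R) : R := Kc p - Ff p t.

Lemma Ff_derive t : 0 <= t -> is_derive (Ff p) t (Fintegrand t).
Proof.
  intros Ht. destruct zY_pos_from as [s0 [Hs0 HY]].
  apply (is_derive_RInt_halfline Fintegrand 0 s0 t); [lra | lra |].
  intros s Hs. apply (ex_derive_continuous Fintegrand).
  unfold Fintegrand, Rpower. auto_derive.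
  repeat split; [eexists; apply zf_derive, HY; lra | apply zf_pos].
Qed.

Lemma Ftail_derive t : 0 <= t -> is_derive Ftail t (- Fintegrand t).
Proof.
  intros Ht. unfold Ftail. auto_derive; [eexists; apply Ff_derive, Ht |].
  rewrite_Derive (Ff_derive t Ht). ring.
Qed.

Lemma Ftail_lim : is_lim Ftail p_infty 0.
Proof.
  replace 0 with (Kc p - Kc p) by ring.
  exact (is_lim_minus' _ _ _ _ _ (is_lim_const (Kc p) p_infty) F_lim).
Qed.

Lemma Ftail_pos t : 0 <= t -> 0 < Ftail t.
Proof.
  intros Ht. apply (is_lim_lt_of_derive_neg Ftail (fun s => - Fintegrand s) t 0).
  - intros s Hs. apply Ftail_derive. lra.
  - intros s _. unfold Fintegrand.
    assert (0 < Rpower (zf p s) ((σ - β) / σ) * exp (- theta p * s))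
      by (apply Rmult_lt_0_compat; [apply Rpower_pos | apply exp_pos]).
    lra.
  - exact Ftail_lim.
Qed.

Lemma Ftail_bound : exists M, forall t, 0 <= t -> Ftail t <= M * exp (- theta p * t).
Proof.
  destruct (zf_pow_bounded ((σ - β) / σ)) as [M HM].
  exists (M / theta p). intros t Ht.
  set (psi := fun s => M / theta p * exp (- theta p * s) - Ftail s).
  enough (0 <= psi t) by (unfold psi in *; lra).
  apply (is_lim_le_of_derive_nonpos psi (fun s => - M * exp (- theta p * s) + Fintegrand s)).
  - intros s Hs. unfold psi. auto_derive; [eexists; apply Ftail_derive; lra |].
    rewrite_Derive (Ftail_derive s ltac:(lra)). field. apply Rgt_not_eq, theta_pos.
  - intros s Hs. unfold Fintegrand.
    assert (Rpower (zf p s) ((σ - β) / σ) <= M) by (apply HM; lra).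
    assert (0 < exp (- theta p * s)) by apply exp_pos.
    nra.
  - replace 0 with (M / theta p * 0 - 0) by ring.
    apply is_lim_minus'; [| exact Ftail_lim].
    apply (is_lim_scal_l (fun s => exp (- theta p * s)) (M / theta p) p_infty 0).
    apply is_lim_exp_neg. pose proof theta_pos. unfold theta. lra.
Qed.

Definition bracket (t : R) : R :=
  (β * γ * (1 - σ) - (ρ + π - π * σ) * Rpower (zf p t) (β - 1)) * Ftail t
  + σ * Rpower (zf p t) (β - β / σ) * exp (- theta p * t).

Lemma bracket_derive t : 0 <= t ->
  is_derive bracket t (- zrate * bracket t - γ * (1 - β) * (ρ - δ + δ * σ) * Ftail t).
Proof.
  intros Ht. assert (Hz := zf_derive t (zY_pos t Ht)). assert (HF := Ff_derive t Ht).
  assert (0 < zf p t) by apply zf_pos.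
  unfold bracket, Ftail, Rpower. auto_derive.
  - repeat split; auto; eexists; eauto.
  - rewrite_Derive Hz. rewrite_Derive HF.
    unfold zgrowth, Fintegrand, Rpower. set (lz := ln (zf p t)).
    replace (exp ((β - β / σ) * lz)) with (exp ((β - 1) * lz) * exp ((σ - β) / σ * lz))
      by (rewrite <- exp_plus; f_equal; field; lra).
    replace (exp ((1 - β) * lz)) with (/ exp ((β - 1) * lz))
      by (rewrite <- exp_Ropp; f_equal; ring).
    assert (0 < exp ((β - 1) * lz)) by apply exp_pos.
    unfold zrate, theta. field. repeat split; lra.
Qed.

Lemma bracket_bound : exists C, forall t, 0 <= t -> Rabs (bracket t) <= C * exp (- theta p * t).
Proof.
  destruct Ftail_bound as [M HM].
  destruct (zf_pow_bounded (β - 1)) as [M1 HM1].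
  destruct (zf_pow_bounded (β - β / σ)) as [M2 HM2].
  set (A := Rabs (β * γ * (1 - σ)) + Rabs (ρ + π - π * σ) * M1).
  exists (A * M + σ * M2). intros t Ht.
  assert (HG := Ftail_pos t Ht). specialize (HM t Ht). specialize (HM1 t Ht). specialize (HM2 t Ht).
  assert (0 < Rpower (zf p t) (β - 1)) by apply Rpower_pos.
  assert (0 < Rpower (zf p t) (β - β / σ)) by apply Rpower_pos.
  assert (0 < exp (- theta p * t)) by apply exp_pos.
  assert (HP : Rabs (β * γ * (1 - σ) - (ρ + π - π * σ) * Rpower (zf p t) (β - 1)) <= A).
  { unfold A. eapply Rle_trans; [apply Rabs_triang |].
    rewrite Rabs_Ropp, (Rabs_mult (ρ + π - π * σ)), (Rabs_right (Rpower _ _)) by lra.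
    apply Rplus_le_compat_l, Rmult_le_compat_l; [apply Rabs_pos | exact HM1]. }
  unfold bracket. eapply Rle_trans; [apply Rabs_triang |].
  assert (0 < σ * Rpower (zf p t) (β - β / σ) * exp (- theta p * t))
    by (repeat apply Rmult_lt_0_compat; lra).
  rewrite (Rabs_mult _ (Ftail t)), (Rabs_right (Ftail t)), (Rabs_right (σ * _ * _)) by lra.
  assert (0 <= Rabs (β * γ * (1 - σ) - (ρ + π - π * σ) * Rpower (zf p t) (β - 1)))
    by apply Rabs_pos.
  assert (Rabs (β * γ * (1 - σ) - (ρ + π - π * σ) * Rpower (zf p t) (β - 1)) * Ftail t
          <= A * (M * exp (- theta p * t))) by (apply Rmult_le_compat; lra).
  assert (σ * Rpower (zf p t) (β - β / σ) * exp (- theta p * t)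
          <= σ * M2 * exp (- theta p * t)).
  { apply Rmult_le_compat_r; [lra |]. apply Rmult_le_compat_l; lra. }
  nra.
Qed.

Lemma transversality_rate_pos : 0 < δ - (δ - ρ) / σ.
Proof.
  apply (Rmult_lt_reg_r σ); [exact sig_pos |].
  replace ((δ - (δ - ρ) / σ) * σ) with (ρ - δ + δ * σ) by (field; lra). lra.
Qed.

Lemma zrate_lt_theta : zrate < theta p.
Proof.
  pose proof transversality_rate_pos.
  replace (theta p) with (zrate + (δ - (δ - ρ) / σ)) by (unfold theta, zrate; field; lra).
  lra.
Qed.

Lemma bracket_pos t : 0 <= t -> 0 < bracket t.
Proof.
  intros Ht. destruct bracket_bound as [C HC].
  assert (0 < exp (zrate * t)) by apply exp_pos.
  enough (0 < bracket t * exp (zrate * t)) by nra.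
  apply (is_lim_lt_of_derive_neg (fun s => bracket s * exp (zrate * s))
           (fun s => - (γ * (1 - β) * (ρ - δ + δ * σ)) * Ftail s * exp (zrate * s))).
  - intros s Hs. auto_derive; [eexists; apply bracket_derive; lra |].
    rewrite_Derive (bracket_derive s ltac:(lra)). ring.
  - intros s Hs.
    assert (0 < γ * (1 - β) * (ρ - δ + δ * σ)) by (repeat apply Rmult_lt_0_compat; lra).
    assert (0 < Ftail s) by (apply Ftail_pos; lra).
    assert (0 < exp (zrate * s)) by apply exp_pos.
    assert (0 < γ * (1 - β) * (ρ - δ + δ * σ) * Ftail s * exp (zrate * s))
      by (repeat apply Rmult_lt_0_compat; lra).
    lra.
  - apply (is_lim_0_of_exp_bound _ C (zrate - theta p)).
    + pose proof zrate_lt_theta. lra.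
    + intros s Hs. rewrite Rabs_mult, (Rabs_right (exp _)) by (left; apply exp_pos).
      replace ((zrate - theta p) * s) with (- theta p * s + zrate * s) by ring.
      rewrite exp_plus, <- Rmult_assoc.
      apply Rmult_le_compat_r; [left; apply exp_pos | apply HC; exact Hs].
Qed.

Hypothesis c1_pos : 0 < c1.
Hypothesis c0_pos : 0 < c0.
Hypothesis k0_pos : 0 < k0.
Hypothesis h0_pos : 0 < h0.
Hypothesis u0_pos : 0 < u0.
Hypothesis u0_eq : u0 = z0 * k0 / h0.
Hypothesis c0_eq :
  c0 * Rpower z0 (β / σ) = Rpower (c1 * δ / ((1 - β) * γ)) (- (1 / σ)).
Hypothesis Dc_eq : γ * (1 - β) * (ρ - δ + δ * σ) / δ = u0 / k0 * Dc p.

Definition kgrowth : R := (δ + π - π * β) / β.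

Definition cbase : R := c0 * Rpower z0 (β / σ).

Definition hscale : R := h0 * cbase / (z0 * Dc p).

Lemma cbase_pos : 0 < cbase.
Proof. apply Rmult_lt_0_compat; [exact c0_pos | apply Rpower_pos]. Qed.

Lemma Dc_pos : 0 < Dc p.
Proof.
  assert (0 < γ * (1 - β) * (ρ - δ + δ * σ) / δ)
    by (apply Rdiv_lt_0_compat; [repeat apply Rmult_lt_0_compat |]; lra).
  assert (0 < u0 / k0) by (apply Rdiv_lt_0_compat; lra).
  rewrite Dc_eq in *. destruct (Rlt_le_dec 0 (Dc p)); [assumption | nra].
Qed.

Lemma hscale_pos : 0 < hscale.
Proof.
  pose proof cbase_pos. pose proof Dc_pos.
  apply Rdiv_lt_0_compat; apply Rmult_lt_0_compat; lra.
Qed.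

Lemma exp_cf_split t :
  exp (- ((ρ - δ) / σ) * t) = exp (kgrowth * t) * exp (- theta p * t).
Proof. rewrite <- exp_plus. f_equal. unfold kgrowth, theta. field. lra. Qed.

Lemma kf_eq t : kf p t = cbase * Ftail t / zf p t * exp (kgrowth * t).
Proof. unfold kf, Ftail, cbase, kgrowth. field. apply Rgt_not_eq, zf_pos. Qed.

Lemma hf_eq t : hf p t = hscale * exp (kgrowth * t) * bracket t.
Proof.
  unfold hf, hscale, bracket, cbase. rewrite exp_cf_split. unfold Ftail, kgrowth.
  field. pose proof Dc_pos. lra.
Qed.

Lemma uf_eq t : uf p t = u0 / k0 * Dc p * (Ftail t / bracket t).
Proof. reflexivity. Qed.

Lemma kf_pos t : 0 <= t -> 0 < kf p t.
Proof.
  intros Ht. rewrite kf_eq. pose proof cbase_pos. pose proof (Ftail_pos t Ht).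
  apply Rmult_lt_0_compat; [| apply exp_pos].
  apply Rdiv_lt_0_compat; [apply Rmult_lt_0_compat; lra | apply zf_pos].
Qed.

Lemma hf_pos t : 0 <= t -> 0 < hf p t.
Proof.
  intros Ht. rewrite hf_eq. pose proof hscale_pos. pose proof (bracket_pos t Ht).
  pose proof (exp_pos (kgrowth * t)). apply Rmult_lt_0_compat; [apply Rmult_lt_0_compat |]; lra.
Qed.

Lemma zf_ratio t : 0 <= t -> zf p t = hf p t * uf p t / kf p t.
Proof.
  intros Ht. rewrite kf_eq, hf_eq, uf_eq. unfold hscale. rewrite u0_eq.
  pose proof cbase_pos. pose proof Dc_pos. pose proof (Ftail_pos t Ht).
  pose proof (bracket_pos t Ht). pose proof (zf_pos t). pose proof (exp_pos (kgrowth * t)).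
  field. repeat split; lra.
Qed.

Lemma uf_ratio t : 0 <= t -> uf p t = zf p t * kf p t / hf p t.
Proof.
  intros Ht. rewrite (zf_ratio t Ht).
  pose proof (kf_pos t Ht). pose proof (hf_pos t Ht). field. lra.
Qed.

Lemma lamf_cf t : lamf p t = Rpower (cf p t) (- σ).
Proof.
  unfold lamf, cf. rewrite c0_eq.
  assert (HL : 0 < c1 * δ / ((1 - β) * γ))
    by (apply Rdiv_lt_0_compat; repeat apply Rmult_lt_0_compat; lra).
  rewrite <- !Rpower_mult_distr;
    try apply Rmult_lt_0_compat; try apply Rpower_pos; try apply exp_pos.
  rewrite !Rpower_mult, Rpower_exp.
  replace (- (1 / σ) * - σ) with 1 by (field; lra).
  replace (- σ * (- ((ρ - δ) / σ) * t)) with ((ρ - δ) * t) by (field; lra).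
  replace (- (β / σ) * - σ) with β by (field; lra).
  rewrite Rpower_1 by exact HL. reflexivity.
Qed.

Lemma uf_pow t : 0 <= t ->
  Rpower (uf p t) β
  = γ * (1 - β) * Rpower (kf p t) β * Rpower (hf p t) (- β) / δ * (lamf p t / muf p t).
Proof.
  intros Ht. pose proof (kf_pos t Ht). pose proof (hf_pos t Ht).
  rewrite (uf_ratio t Ht), Rpower_ratio, Rpower_Ropp by (auto; apply zf_pos).
  unfold lamf, muf.
  pose proof (Rpower_pos (hf p t) β). pose proof (exp_pos ((ρ - δ) * t)).
  field. repeat split; lra.
Qed.

Lemma kf_derive t : 0 <= t ->
  is_derive (kf p) t
    (γ * Rpower (kf p t) β * Rpower (uf p t) (1 - β) * Rpower (hf p t) (1 - β)
     - π * kf p t - cf p t).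
Proof.
  intros Ht. pose proof (kf_pos t Ht). pose proof (hf_pos t Ht). pose proof (zf_pos t).
  assert (Hz := zf_derive t (zY_pos t Ht)). assert (HG := Ftail_derive t Ht).
  replace (γ * Rpower (kf p t) β * Rpower (uf p t) (1 - β) * Rpower (hf p t) (1 - β))
    with (γ * (kf p t * Rpower (zf p t) (1 - β)))
    by (rewrite (uf_ratio t Ht), <- (Rpower_cobb_douglas (kf p t) (hf p t)) by auto; ring).
  apply (is_derive_ext (fun s => cbase * Ftail s / zf p s * exp (kgrowth * s)));
    [intros s; symmetry; apply kf_eq |].
  auto_derive; [repeat split; try (eexists; eauto); lra |].
  rewrite_Derive Hz. rewrite_Derive HG.
  rewrite kf_eq. unfold cf. rewrite exp_cf_split. fold cbase.
  unfold Fintegrand, zgrowth, kgrowth.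
  replace (Rpower (zf p t) ((σ - β) / σ)) with (zf p t * Rpower (zf p t) (- (β / σ)))
    by (rewrite <- Rpower_1_plus by auto; f_equal; field; lra).
  field. repeat split; lra.
Qed.

Lemma hf_derive t : 0 <= t -> is_derive (hf p) t (δ * (1 - uf p t) * hf p t).
Proof.
  intros Ht. assert (HB := bracket_derive t Ht). pose proof (bracket_pos t Ht).
  apply (is_derive_ext (fun s => hscale * exp (kgrowth * s) * bracket s));
    [intros s; symmetry; apply hf_eq |].
  auto_derive; [eexists; exact HB |].
  rewrite_Derive HB. rewrite uf_eq, hf_eq.
  replace (γ * (1 - β) * (ρ - δ + δ * σ)) with (δ * (u0 / k0 * Dc p))
    by (rewrite <- Dc_eq; field; lra).
  unfold kgrowth, zrate. field. repeat split; lra.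
Qed.

Lemma lamf_derive t : 0 <= t ->
  is_derive (lamf p) t
    (- lamf p t * γ * β * Rpower (uf p t) (1 - β) * Rpower (kf p t) (β - 1)
       * Rpower (hf p t) (1 - β) + lamf p t * (ρ + π)).
Proof.
  intros Ht. pose proof (kf_pos t Ht). pose proof (hf_pos t Ht). pose proof (zf_pos t).
  assert (Hz := zf_derive t (zY_pos t Ht)).
  replace (- lamf p t * γ * β * Rpower (uf p t) (1 - β) * Rpower (kf p t) (β - 1)
             * Rpower (hf p t) (1 - β))
    with (- lamf p t * γ * β * Rpower (zf p t) (1 - β))
    by (rewrite (uf_ratio t Ht), <- (Rpower_cobb_douglas_div (kf p t) (hf p t)) by auto; ring).
  unfold lamf, Rpower. auto_derive; [repeat split; try (eexists; eauto); lra |].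
  rewrite_Derive Hz. unfold zgrowth, Rpower. field. repeat split; lra.
Qed.

Lemma muf_derive t : is_derive (muf p) t (muf p t * (ρ - δ)).
Proof. unfold muf. auto_derive; [exact I | ring]. Qed.

Lemma Ftail_0 : Ftail 0 = Kc p.
Proof. unfold Ftail, Ff. rewrite RInt_point. unfold zero. simpl. ring. Qed.

Lemma Kc_cbase : Kc p * cbase = k0 * z0.
Proof.
  unfold Kc, cbase. replace ((β - σ) / σ) with (- (1) + β / σ) by (field; lra).
  rewrite Rpower_plus, Rpower_Ropp, Rpower_1 by exact z0_pos.
  pose proof (Rpower_pos z0 (β / σ)). field. repeat split; lra.
Qed.

Lemma cf_0 : cf p 0 = c0.
Proof.
  unfold cf. rewrite zf_0, Rmult_0_r, exp_0, Rmult_1_r, Rpower_Ropp.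
  pose proof (Rpower_pos z0 (β / σ)). field. lra.
Qed.

Lemma kf_0 : kf p 0 = k0.
Proof.
  rewrite kf_eq, Ftail_0, zf_0, Rmult_0_r, exp_0, (Rmult_comm cbase), Kc_cbase.
  field. lra.
Qed.

Lemma hf_0 : hf p 0 = h0.
Proof.
  rewrite hf_eq. unfold bracket, hscale. rewrite Ftail_0, zf_0, !Rmult_0_r, !exp_0.
  replace (Kc p) with (k0 * z0 / cbase)
    by (rewrite <- Kc_cbase; field; apply Rgt_not_eq, cbase_pos).
  assert (Hpow : Rpower z0 (β - β / σ) * Rpower z0 (β / σ) = z0 * Rpower z0 (β - 1))
    by (rewrite <- Rpower_plus, <- Rpower_1_plus by exact z0_pos; f_equal; ring).
  replace (Rpower z0 (β - β / σ)) with (z0 * Rpower z0 (β - 1) / Rpower z0 (β / σ))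
    by (rewrite <- Hpow; field; apply Rgt_not_eq, Rpower_pos).
  pose proof Dc_pos. pose proof (Rpower_pos z0 (β / σ)).
  unfold Dc, cbase in *. field. repeat split; lra.
Qed.

Lemma uf_0 : uf p 0 = u0.
Proof. rewrite (uf_ratio 0 (Rle_refl 0)), zf_0, kf_0, hf_0. symmetry. exact u0_eq. Qed.

Lemma exp_discount t :
  exp (- ρ * t) * exp ((ρ - δ) * t) * exp (kgrowth * t)
  = exp (theta p * t) * exp (- (δ - (δ - ρ) / σ) * t).
Proof. rewrite <- !exp_plus. f_equal. unfold kgrowth, theta. field. lra. Qed.

Lemma transversality_k : is_lim (fun t => exp (- ρ * t) * lamf p t * kf p t) p_infty 0.
Proof.
  destruct Ftail_bound as [M HM]. destruct (zf_pow_bounded (β - 1)) as [M1 HM1].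
  set (L := c1 * δ / ((1 - β) * γ)).
  assert (HL : 0 < L) by (apply Rdiv_lt_0_compat; repeat apply Rmult_lt_0_compat; lra).
  pose proof cbase_pos.
  apply (is_lim_0_of_exp_bound _ (L * cbase * M1 * M) (- (δ - (δ - ρ) / σ)));
    [pose proof transversality_rate_pos; lra |].
  intros t Ht. specialize (HM t Ht). specialize (HM1 t Ht).
  pose proof (Ftail_pos t Ht). pose proof (zf_pos t). pose proof (Rpower_pos (zf p t) (β - 1)).
  pose proof (exp_pos (theta p * t)). pose proof (exp_pos (- (δ - (δ - ρ) / σ) * t)).
  apply le_mul_exp_of_le_exp_neg in HM.
  assert (0 < Ftail t * exp (theta p * t)) by (apply Rmult_lt_0_compat; lra).
  assert (0 < L * cbase) by (apply Rmult_lt_0_compat; lra).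
  replace (exp (- ρ * t) * lamf p t * kf p t)
    with (L * cbase * (Rpower (zf p t) (β - 1) * (Ftail t * exp (theta p * t)))
          * exp (- (δ - (δ - ρ) / σ) * t)).
  - rewrite Rabs_right.
    + apply Rmult_le_compat_r; [lra |]. rewrite (Rmult_assoc _ M1).
      apply Rmult_le_compat_l; [lra |]. apply Rmult_le_compat; lra.
    + apply Rle_ge, Rlt_le.
      apply Rmult_lt_0_compat; [apply Rmult_lt_0_compat, Rmult_lt_0_compat |]; lra.
  - transitivity (L * cbase * Rpower (zf p t) (β - 1) * Ftail t
                   * (exp (theta p * t) * exp (- (δ - (δ - ρ) / σ) * t))); [ring |].
    rewrite <- exp_discount. unfold lamf. fold L. rewrite kf_eq.
    replace (Rpower (zf p t) β) with (zf p t * Rpower (zf p t) (β - 1))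
      by (rewrite <- Rpower_1_plus by auto; f_equal; ring).
    field. lra.
Qed.

Lemma transversality_h : is_lim (fun t => exp (- ρ * t) * muf p t * hf p t) p_infty 0.
Proof.
  destruct bracket_bound as [C HC]. pose proof hscale_pos.
  apply (is_lim_0_of_exp_bound _ (c1 * hscale * C) (- (δ - (δ - ρ) / σ)));
    [pose proof transversality_rate_pos; lra |].
  intros t Ht. specialize (HC t Ht).
  apply le_mul_exp_of_le_exp_neg in HC.
  replace (exp (- ρ * t) * muf p t * hf p t)
    with (c1 * hscale * (bracket t * exp (theta p * t)) * exp (- (δ - (δ - ρ) / σ) * t)).
  - pose proof (exp_pos (theta p * t)). pose proof (exp_pos (- (δ - (δ - ρ) / σ) * t)).
    rewrite !Rabs_mult, (Rabs_right c1), (Rabs_right hscale),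
      (Rabs_right (exp (theta p * t))), (Rabs_right (exp (- _ * t))) by lra.
    apply Rmult_le_compat_r; [lra |].
    apply Rmult_le_compat_l; [apply Rmult_le_pos; lra | exact HC].
  - transitivity (c1 * hscale * bracket t
                   * (exp (theta p * t) * exp (- (δ - (δ - ρ) / σ) * t))); [ring |].
    rewrite <- exp_discount. unfold muf. rewrite hf_eq. ring.
Qed.

End LucasUzawaPath.

Theorem mainTheorem1 (p : LUparams) :
  0 < lu_rho p -> 0 < lu_dpi p -> 0 < lu_gam p -> 0 < lu_del p ->
  0 < lu_bet p < 1 -> 0 < lu_sig p -> lu_sig p <> 1 ->
  lu_rho p < lu_del p -> lu_del p < lu_rho p + lu_del p * lu_sig p ->
  (lu_del p + lu_dpi p - lu_dpi p * lu_bet p) / lu_bet p - (lu_del p - lu_rho p) / lu_sig p > 0 ->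
  0 < lu_c1 p -> 0 < lu_z0 p -> lu_z0 p <> zstar p ->
  0 < lu_c0 p -> 0 < lu_k0 p -> 0 < lu_h0 p -> 0 < lu_u0 p ->
  lu_u0 p = lu_z0 p * lu_k0 p / lu_h0 p ->
  lu_c0 p * Rpower (lu_z0 p) (lu_bet p / lu_sig p)
    = Rpower (lu_c1 p * lu_del p / ((1 - lu_bet p) * lu_gam p)) (- (1 / lu_sig p)) ->
  is_lim (Ff p) p_infty (Kc p) ->
  lu_gam p * (1 - lu_bet p) * (lu_rho p - lu_del p + lu_del p * lu_sig p) / lu_del p
    = lu_u0 p / lu_k0 p * Dc p ->
  (forall t, 0 <= t ->
     lamf p t = Rpower (cf p t) (- lu_sig p)
     /\ Rpower (uf p t) (lu_bet p)
        = lu_gam p * (1 - lu_bet p) * Rpower (kf p t) (lu_bet p)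
          * Rpower (hf p t) (- lu_bet p) / lu_del p * (lamf p t / muf p t)
     /\ is_derive (kf p) t
          (lu_gam p * Rpower (kf p t) (lu_bet p) * Rpower (uf p t) (1 - lu_bet p)
           * Rpower (hf p t) (1 - lu_bet p) - lu_dpi p * kf p t - cf p t)
     /\ is_derive (hf p) t (lu_del p * (1 - uf p t) * hf p t)
     /\ is_derive (lamf p) t
          (- lamf p t * lu_gam p * lu_bet p * Rpower (uf p t) (1 - lu_bet p)
             * Rpower (kf p t) (lu_bet p - 1) * Rpower (hf p t) (1 - lu_bet p)
           + lamf p t * (lu_rho p + lu_dpi p))
     /\ is_derive (muf p) t (muf p t * (lu_rho p - lu_del p))
     /\ zf p t = hf p t * uf p t / kf p t)
  /\ cf p 0 = lu_c0 p /\ kf p 0 = lu_k0 p /\ hf p 0 = lu_h0 p /\ uf p 0 = lu_u0 p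
  /\ zf p 0 = lu_z0 p
  /\ is_lim (fun t => exp (- lu_rho p * t) * lamf p t * kf p t) p_infty 0
  /\ is_lim (fun t => exp (- lu_rho p * t) * muf p t * hf p t) p_infty 0.
Proof.
  (* The construction needs none of ρ > 0, σ ≠ 1, ρ < δ and z0 ≠ z*. *)
  intros _ Hpi Hgam Hdel Hbet Hsig _ _ Hdel_lt Htheta Hc1 Hz0 _ Hc0 Hk0 Hh0 Hu0
    Hu0_eq Hc0_eq Hlim HDc.
  split.
  - intros t Ht.
    split; [apply lamf_cf; auto |].
    split; [apply uf_pow; auto |].
    split; [apply kf_derive; auto |].
    split; [apply hf_derive; auto |].
    split; [apply lamf_derive; auto |].
    split; [apply muf_derive |].
    apply zf_ratio; auto.
  - split; [apply cf_0; auto |].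
    split; [apply kf_0; auto |].
    split; [apply hf_0; auto |].
    split; [apply uf_0; auto |].
    split; [apply zf_0; auto |].
    split; [apply transversality_k | apply transversality_h]; auto.
Qed.
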